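(* Let $\Psi=\langle\mathcal{S},\mathcal{P},\mathcal{T}\rangle$ be an SPL with internally consistent (e.g. canonical) traceability relation, let $f\in\mathcal{F}$ and $c_k\in\mathcal{C}$. Then $c_k$ is critical for $f$ if and only if the quantified Boolean formula $\forall c'_1\cdots c'_n\,\{[\,C_I(c'_1,\dots,c'_n)\wedge f\_implements(c'_1,\dots,c'_n,f)\,]\Rightarrow c'_k\}$ is true.
   Context: $\mathcal{C}=\{c_1,\dots,c_n\}$ components, $\mathcal{F}$ features, platform $\mathcal{P}\subseteq\mathcal{P}ow(\mathcal{C})$, $\mathcal{T}=\langle prov,req\rangle$ with $prov,req:\mathcal{F}\to\mathcal{P}ow(\mathcal{P}ow(\mathcal{C}))$. $implements(C,f)$ iff $\exists C_1\in prov(f),C_2\in req(f)$ with $C_2\subseteq C_1\subseteq C$. A component $c$ is critical for $f$ if for all $C\in\mathcal{P}$, $c\notin C$ implies $\neg implements(C,f)$. Internally consistent: for every $f$ and $C\in prov(f)$ there is $C'\in req(f)$ with $C'\subseteq C$. With Boolean variables $c_1,\dots,c_n$: $formula\_prov(f)=\bigvee_{S\in prov(f)}\bigwedge_{c_i\in S}c_i$ (FALSE if $prov(f)=\emptyset$); $f\_implements(c'_1,\dots,c'_n,f)=\forall c_1\cdots c_n\{[\bigwedge_i(c'_i\Rightarrow c_i)]\Rightarrow formula\_prov(f)\}$ (inner bound variables distinct from $c'_i$). $C_I(c'_1,\dots,c'_n)=\bigvee_{A\in\mathcal{P}}\bigwedge_{i=1}^n\ell^A_i$ with $\ell^A_i=c'_i$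 if $c_i\in A$ and $\neg c'_i$ otherwise, so $C_I(c')$ holds iff $c'$ is the characteristic vector of some $A\in\mathcal{P}$. *)

(* Components c_1..c_n are modelled as 'I_n (c_{i+1} ~ i).
   A set of components is a {set 'I_n}; the platform P and prov f, req f
   are sets of sets of components. *)
From mathcomp Require Import all_boot.
Set Implicit Arguments. Unset Strict Implicit. Unset Printing Implicit Defensive.

Section SPL.
Variables (n : nat) (Feat : Type).

Record trace := Trace {
  prov : Feat -> {set {set 'I_n}};
  req  : Feat -> {set {set 'I_n}} }.

Definition implements (T : trace) (C : {set 'I_n}) (f : Feat) : Prop :=
  exists C1 C2, [/\ C1 \in prov T f, C2 \in req T f,
                    C2 \subset C1 & C1 \subset C].

Definition critical (P : {set {set 'I_n}}) (T : trace) (c : 'I_n) (f : Feat)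
  : Prop :=
  forall C, C \in P -> c \notin C -> ~ implements T C f.

Definition internally_consistent (T : trace) : Prop :=
  forall f C, C \in prov T f -> exists2 C', C' \in req T f & C' \subset C.

Definition valuation := 'I_n -> bool.

(* formula_prov(f) = \/_{S in prov f} /\_{c_i in S} c_i  (FALSE if empty) *)
Definition formula_prov (T : trace) (f : Feat) (v : valuation) : Prop :=
  exists2 S, S \in prov T f & forall i, i \in S -> v i.

Definition f_implements (T : trace) (v' : valuation) (f : Feat) : Prop :=
  forall v : valuation, (forall i, v' i -> v i) -> formula_prov T f v.

(* C_I(c') = \/_{A in P} /\_i l^A_i, l^A_i = c'_i if c_i in A, ~c'_i else *)
Definition C_I (P : {set {set 'I_n}}) (v' : valuation) : Prop :=
  exists2 A, A \in P &
    forall i, (if i \in A then v' i = true else v' i = false).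

End SPL.

(* The
   proof identifies each of its ingredients with a set-theoretic notion:
   - C_I P v' holds exactly when v' is the characteristic vector of some
     configuration A in the platform P;
   - f_implements v' f is equivalent to formula_prov f v', because
     formula_prov is monotone in the valuation;
   - on the characteristic vector of C, formula_prov f says that some
     provided set S of f is contained in C, and under internal consistency
     this is exactly implements C f (a matching required set always exists).  Instantiating the formula at characteristic
   vectors and translating with the facts above gives the equivalence. *)

From mathcomp Require Import all_boot.

Set Implicit Arguments.
Unset Strict Implicit.
Unset Printing Implicit Defensive.

Section Criticality.
Variables (n : nat) (Feat : Type).
Implicit Types (T : trace n Feat) (f : Feat) (v w : valuation n)
  (C A : {set 'I_n}) (P : {set {set 'I_n}}).

Definition charvec C : valuation n := fun i => i \in C.

(* formula_prov is a positive formula, hence monotone in the valuation. *)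
Lemma formula_prov_mono T f v w :
  (forall i, v i -> w i) -> formula_prov T f v -> formula_prov T f w.
Proof. by move=> hvw [S hS hSv]; exists S => // i /hSv /hvw. Qed.

(* Hence the universal quantification in f_implements collapses onto v'. *)
Lemma f_implementsE T f v : f_implements T v f <-> formula_prov T f v.
Proof.
split=> [himp | hprov w hvw]; first exact: himp.
exact: formula_prov_mono hprov.
Qed.

Lemma formula_prov_eq T f v w :
  v =1 w -> formula_prov T f v -> formula_prov T f w.
Proof. by move=> hvw; apply: formula_prov_mono => i; rewrite hvw. Qed.

Lemma formula_prov_charvec T f C :
  formula_prov T f (charvec C) <-> exists2 S, S \in prov T f & S \subset C.
Proof.
split=> [[S hS hSC] | [S hS /subsetP hSC]]; exists S => //.
exact/subsetP.
Qed.

(* Under internal consistency the required set in implements comes for free: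
   implementing f only depends on the provided sets. *)
Lemma implementsE T C f :
  internally_consistent T ->
  implements T C f <-> exists2 S, S \in prov T f & S \subset C.
Proof.
move=> hic; split=> [[C1 [C2 [h1 _ _ h1C]]] | [S hS hSC]].
  by exists C1.
have [C' hC' hC'S] := hic f S hS.
by exists S, C'.
Qed.

Lemma C_IP P v : C_I P v <-> exists2 A, A \in P & v =1 charvec A.
Proof.
split=> [[A hA hv] | [A hA hvA]]; exists A => // i; last by rewrite hvA /charvec; case: ifP.
by move: (hv i); rewrite /charvec; case: (i \in A).
Qed.

End Criticality.

Theorem mainTheorem9 (n : nat) (Feat : Type) (P : {set {set 'I_n}})
    (T : trace n Feat) (f : Feat) (k : 'I_n) :
  internally_consistent T ->
  (critical P T k f <->
   (forall v' : valuation n, C_I P v' /\ f_implements T v' f -> v' k)).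
Proof.
move=> hic; split.
- (* A valuation satisfying the hypotheses is the vector of a configuration
     of P implementing f, which therefore contains k. *)
  move=> hcr v' [/C_IP [A hA hvA] /f_implementsE hprov].
  have hprovA := formula_prov_eq hvA hprov.
  have himpA : implements T A f by apply/(implementsE _ _ hic)/formula_prov_charvec.
  rewrite hvA /charvec; apply/negPn/negP => hkA.
  exact: hcr A hA hkA himpA.
- (* Instantiate the formula at the characteristic vector of C. *)
  move=> hqbf C hC hkC /(implementsE _ _ hic) hsub.
  have hprov : formula_prov T f (charvec C) by apply/formula_prov_charvec.
  have hkC' : charvec C k by apply: hqbf; split;
    [apply/C_IP; exists C | exact/f_implementsE].
  by rewrite /charvec (negbTE hkC) in hkC'.
Qed.
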